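(* Suppose that for every $n\ge1$, $S_n\subset\mathbb{R}^2$ is the union of finitely many pairwise disjoint closed PL topological disks and $S_{n+1}\subset\mathrm{int}(S_n)$. Then $\lim_{n\to\infty}M(S_n,S_{n+1})=0$ if and only if $\lim_{n\to\infty}N(S_n,S_{n+1})=0$.
   Context: PL means piecewise linear; $l(\gamma)$ is Euclidean length. For $A\subset\mathbb{R}^2$ a union of finitely many pairwise disjoint closed PL disks and $B\subset A$, with $\partial A$ the union of the boundary circles of the components of $A$: $N(A,B)=\inf\{\delta>0:$ for each $x\in\partial A$ there exist $y\in B$ and a PL arc $\gamma\subset A$ from $x$ to $y$ with $l(\gamma)<\delta\}$, and $M(A,B)=\inf\{\delta>0:$ for each $x\in A$ there exist $y\in B$ and a PL arc $\gamma\subset A$ from $x$ to $y$ with $l(\gamma)<\delta\}$. *)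

From Stdlib Require Import Reals List.
From Coquelicot Require Import Coquelicot.
Import ListNotations.
Open Scope R_scope.

Definition pt := (R * R)%type.
Definition pset := pt -> Prop.

Definition dist2 (p q : pt) : R :=
  sqrt ((fst p - fst q) ^ 2 + (snd p - snd q) ^ 2).
Definition norm2 (p : pt) : R := dist2 p (0, 0).

Definition seg (p q : pt) : pset :=
  fun x => exists t, 0 <= t <= 1 /\
    x = (fst p + t * (fst q - fst p), snd p + t * (snd q - snd p)).

Definition vtx (l : list pt) (i : nat) : pt := nth i l (0, 0).

Definition edge (l : list pt) (i : nat) : pset := seg (vtx l i) (vtx l (S i)).

Definition simple_pl_path (l : list pt) : Prop :=
  (2 <= length l)%nat /\
  (forall i, (S i < length l)%nat -> vtx l i <> vtx l (S i)) /\
  (forall i j x, (S i < length l)%nat -> (S j < length l)%nat -> (i < j)%nat ->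
     edge l i x -> edge l j x -> j = S i /\ x = vtx l j).

Definition on_path (l : list pt) : pset :=
  fun x => exists i, (S i < length l)%nat /\ edge l i x.

Fixpoint pl_length (l : list pt) : R :=
  match l with
  | p :: ((q :: _) as l') => dist2 p q + pl_length l'
  | _ => 0
  end.

Definition pl_arc_in (A : pset) (x y : pt) (l : list pt) : Prop :=
  simple_pl_path l /\ vtx l 0 = x /\ vtx l (pred (length l)) = y /\
  (forall z, on_path l z -> A z).

Definition cedge (l : list pt) (i : nat) : pset :=
  seg (vtx l i) (vtx l (Nat.modulo (S i) (length l))).

Definition simple_polygon (l : list pt) : Prop :=
  (3 <= length l)%nat /\
  (forall i, (i < length l)%nat -> vtx l i <> vtx l (Nat.modulo (S i) (length l))) /\
  (forall i j x, (i < length l)%nat -> (j < length l)%nat -> i <> j ->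
     cedge l i x -> cedge l j x ->
       (j = Nat.modulo (S i) (length l) /\ x = vtx l j) \/
       (i = Nat.modulo (S j) (length l) /\ x = vtx l i)).

Definition on_polygon (l : list pt) : pset :=
  fun x => exists i, (i < length l)%nat /\ cedge l i x.

(* z lies strictly outside a closed ball (centred at 0) containing the polygon *)
Definition far_from (l : list pt) (z : pt) : Prop :=
  forall i, (i < length l)%nat -> norm2 (vtx l i) < norm2 z.

(* the closed region bounded by the polygon = polygon ∪ bounded complementary
   component = points that cannot be joined to the far region by a continuous
   path avoiding the polygon *)
Definition polygon_disk (l : list pt) : pset :=
  fun x => forall z, far_from l z ->
    forall f g : R -> R, continuity f -> continuity g ->
      (f 0, g 0) = x -> (f 1, g 1) = z ->
      exists t, 0 <= t <= 1 /\ on_polygon l (f t, g t).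

Definition disjoint_PL_disks (A : pset) : Prop :=
  exists Ps : list (list pt),
    Ps <> [] /\
    (forall P, In P Ps -> simple_polygon P) /\
    (forall i j x, (i < length Ps)%nat -> (j < length Ps)%nat -> i <> j ->
        polygon_disk (nth i Ps []) x -> polygon_disk (nth j Ps []) x -> False) /\
    (forall x, A x <-> exists P, In P Ps /\ polygon_disk P x).

Definition int_pl (A : pset) : pset :=
  fun x => exists r, 0 < r /\ forall y, dist2 x y < r -> A y.
Definition cl_pl (A : pset) : pset :=
  fun x => forall r, 0 < r -> exists y, dist2 x y < r /\ A y.
(* boundary: for A a union of disjoint closed disks this is the union of
   their boundary circles *)
Definition bdry (A : pset) : pset :=
  fun x => cl_pl A x /\ ~ int_pl A x.

Definition reach_within (A B : pset) (x : pt) (d : R) : Prop :=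
  exists y, B y /\ exists l, pl_arc_in A x y l /\ pl_length l < d.

Definition N_AB (A B : pset) : Rbar :=
  Glb_Rbar (fun d => 0 < d /\ forall x, bdry A x -> reach_within A B x d).

Definition M_AB (A B : pset) : Rbar :=
  Glb_Rbar (fun d => 0 < d /\ forall x, A x -> reach_within A B x d).

Definition Rbar_seq_to_0 (u : nat -> Rbar) : Prop :=
  forall eps, 0 < eps -> exists n0, forall n, (n0 <= n)%nat ->
    Rbar_lt (Finite (- eps)) (u n) /\ Rbar_lt (u n) (Finite eps).

(* Since the boundary of a closed set lies in it, N(A,B) <= M(A,B). Conversely,
   suppose N(S_n, S_(n+1)) < r and let x be a point of S_n. If the r-ball at x lies in
   S_n, it either contains a point of S_(n+1), reached by a straight segment, or misses
   S_(n+1) altogether. Otherwise one runs straight from x to the first boundary point of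
   S_n, at distance < r, and continues along an arc of length < r into S_(n+1). Balls
   missing S_(n+1) occur for only finitely many n, by packing in the bounded set S_0. *)

From Stdlib Require Import Reals List Lra Lia ZArith Classical IndefiniteDescription.
From Coquelicot Require Import Coquelicot.
Import ListNotations.
Open Scope R_scope.

Lemma dist2_ge0 x y : 0 <= dist2 x y.
Proof. apply sqrt_pos. Qed.

Lemma dist2_sym x y : dist2 x y = dist2 y x.
Proof. unfold dist2; f_equal; ring. Qed.

Lemma dist2_refl x : dist2 x x = 0.
Proof. unfold dist2. rewrite !Rminus_diag. simpl. rewrite Rmult_0_l, Rplus_0_l. apply sqrt_0. Qed.

Lemma dist2_eq0 x y : dist2 x y = 0 -> x = y.
Proof.
 destruct x as [a b], y as [c d]; unfold dist2; cbn [fst snd]; intro H.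
 pose proof (pow2_ge_0 (a - c)); pose proof (pow2_ge_0 (b - d)).
 apply sqrt_eq_0 in H; [|lra].
 assert (Ea : (a - c)² = 0) by (rewrite Rsqr_pow2; lra).
 assert (Eb : (b - d)² = 0) by (rewrite Rsqr_pow2; lra).
 apply Rsqr_0_uniq in Ea, Eb. f_equal; lra.
Qed.

Lemma dist2_pos x y : x <> y -> 0 < dist2 x y.
Proof.
 intro Hxy. destruct (dist2_ge0 x y) as [|E]; auto.
 now contradict Hxy; apply dist2_eq0.
Qed.

Definition lin (p q : pt) (t : R) : pt :=
  (fst p + t * (fst q - fst p), snd p + t * (snd q - snd p)).

Lemma lin0 p q : lin p q 0 = p.
Proof. destruct p; unfold lin; simpl; f_equal; ring. Qed.

Lemma lin1 p q : lin p q 1 = q.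
Proof. destruct p, q; unfold lin; simpl; f_equal; ring. Qed.

Lemma lin_lin p q a b t : lin (lin p q a) (lin p q b) t = lin p q (a + t * (b - a)).
Proof. unfold lin; simpl; f_equal; ring. Qed.

Lemma dist_lin_lin p q s t : dist2 (lin p q s) (lin p q t) = Rabs (s - t) * dist2 p q.
Proof.
 unfold lin, dist2; cbn [fst snd].
 replace ((fst p + s * (fst q - fst p) - (fst p + t * (fst q - fst p))) ^ 2 +
          (snd p + s * (snd q - snd p) - (snd p + t * (snd q - snd p))) ^ 2)
   with ((s - t) ^ 2 * ((fst p - fst q) ^ 2 + (snd p - snd q) ^ 2)) by ring.
 rewrite sqrt_mult by (apply pow2_ge_0 || (apply Rplus_le_le_0_compat; apply pow2_ge_0)).
 now rewrite <- pow2_abs, sqrt_pow2 by apply Rabs_pos.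
Qed.

Lemma dist_lin_l p q t : dist2 p (lin p q t) = Rabs t * dist2 p q.
Proof.
 rewrite <- (lin0 p q) at 1. rewrite dist_lin_lin, Rminus_0_l, Rabs_Ropp. reflexivity.
Qed.

Lemma dist_lin_r p q t : dist2 (lin p q t) q = Rabs (1 - t) * dist2 p q.
Proof. rewrite <- (lin1 p q) at 2. rewrite dist_lin_lin, <- Rabs_Ropp. f_equal; f_equal; ring. Qed.

Lemma dist_lin_l_le p q t : 0 <= t <= 1 -> dist2 p (lin p q t) <= dist2 p q.
Proof.
 intro Ht. rewrite dist_lin_l, Rabs_right by lra.
 pose proof (dist2_ge0 p q). nra.
Qed.

Lemma lin_inj p q s t : p <> q -> lin p q s = lin p q t -> s = t.
Proof.
 intros Hpq E. pose proof (dist2_pos p q Hpq).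
 assert (D : Rabs (s - t) * dist2 p q = 0) by now rewrite <- dist_lin_lin, E, dist2_refl.
 apply Rmult_integral in D as [D|D]; [|lra].
 apply Rminus_diag_uniq. now apply Rabs_eq_0.
Qed.

Lemma lin_near p q t e : 0 < e ->
  exists d, 0 < d /\ forall s, Rabs (s - t) < d -> dist2 (lin p q t) (lin p q s) < e.
Proof.
 intro He. pose proof (dist2_ge0 p q).
 exists (e / (dist2 p q + 1)). split; [apply Rdiv_lt_0_compat; lra|].
 intros s Hs. rewrite dist_lin_lin, <- Rabs_Ropp.
 replace (- (t - s)) with (s - t) by ring.
 apply Rle_lt_trans with (e / (dist2 p q + 1) * dist2 p q).
 - apply Rmult_le_compat_r; lra.
 - apply Rmult_lt_reg_r with (dist2 p q + 1); [lra|].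
   field_simplify; lra.
Qed.

Lemma seg_sub p q a b x : 0 <= a <= 1 -> 0 <= b <= 1 ->
  seg (lin p q a) (lin p q b) x -> seg p q x.
Proof.
 intros Ha Hb [t [Ht ->]]. exists (a + t * (b - a)). split; [|apply lin_lin].
 destruct (Rle_dec a b); split; nra.
Qed.

Definition closed_pl (C : pset) : Prop :=
  forall x, ~ C x -> exists d, 0 < d /\ forall y, dist2 x y < d -> ~ C y.

Lemma closed_pl_cl C x : closed_pl C -> cl_pl C x -> C x.
Proof.
 intros HC Hx. apply NNPP; intro Hn. destruct (HC x Hn) as [d [Hd Hb]].
 destruct (Hx d Hd) as [y [Hy Cy]]. exact (Hb y Hy Cy).
Qed.

Lemma closed_pl_ext C C' : (forall x, C x <-> C' x) -> closed_pl C -> closed_pl C'.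
Proof.
 intros E HC x Hx. destruct (HC x) as [d [Hd Hb]]; [now rewrite E|].
 exists d. split; auto. intros y Hy. rewrite <- E. auto.
Qed.

Lemma closed_pl_union_list {T} (l : list T) (C : T -> pset) :
  (forall a, In a l -> closed_pl (C a)) -> closed_pl (fun x => exists a, In a l /\ C a x).
Proof.
 induction l as [|a l IH]; intros HC x Hn.
 - exists 1. split; [lra|]. intros y _ [b [[] _]].
 - destruct (HC a (or_introl eq_refl) x) as [d1 [Hd1 H1]].
   { intro Ca. apply Hn. exists a. split; [left|]; auto. }
   destruct (IH (fun b Hb => HC b (or_intror Hb)) x) as [d2 [Hd2 H2]].
   { intros [b [Hb Cb]]. apply Hn. exists b. split; [right|]; auto. }
   exists (Rmin d1 d2). split; [now apply Rmin_pos|].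
   intros y Hy [b [[<-|Hb] Cb]].
   + apply (H1 y); [pose proof (Rmin_l d1 d2); lra|exact Cb].
   + apply (H2 y); [pose proof (Rmin_r d1 d2); lra|eauto].
Qed.

Lemma seg_closed p q : closed_pl (seg p q).
Proof.
 intros x Hn.
 set (g := fun t => (fst x - fst (lin p q t)) ^ 2 + (snd x - snd (lin p q t)) ^ 2).
 assert (Dg : forall t, dist2 x (lin p q t) = sqrt (g t)) by reflexivity.
 destruct (continuity_ab_min g 0 1) as [m [Hm Hm01]];
   [lra|intros c _; unfold g, lin; simpl; reg|].
 assert (Hgm : 0 < g m).
 { destruct (Rle_lt_or_eq_dec 0 (g m)) as [|E]; auto.
   - unfold g. pose proof (pow2_ge_0 (fst x - fst (lin p q m))).
     pose proof (pow2_ge_0 (snd x - snd (lin p q m))). lra.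
   - exfalso. apply Hn. exists m. split; auto. apply dist2_eq0.
     change (dist2 x (lin p q m) = 0). now rewrite Dg, <- E, sqrt_0. }
 exists (sqrt (g m)). split; [now apply sqrt_lt_R0|].
 intros y Hy [t [Ht ->]]. fold (lin p q t) in Hy. rewrite Dg in Hy.
 pose proof (sqrt_le_1_alt _ _ (Hm t Ht)). lra.
Qed.

Lemma on_polygon_closed P : closed_pl (on_polygon P).
Proof.
 apply (closed_pl_ext (fun x => exists i, In i (seq 0 (length P)) /\ cedge P i x)).
 - intro x. split; intros [i [Hi Hx]]; exists i; rewrite in_seq in *; split; auto; lia.
 - apply closed_pl_union_list. intros i _. apply seg_closed.
Qed.

Definition pos_part (u : R) : R := (u + Rabs u) / 2.

Lemma pos_part_nonneg u : 0 <= u -> pos_part u = u.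
Proof. intro; unfold pos_part; rewrite Rabs_right; lra. Qed.

Lemma pos_part_nonpos u : u <= 0 -> pos_part u = 0.
Proof. intro; unfold pos_part; rewrite Rabs_left1; lra. Qed.

Lemma continuity_prepend h u : continuity h ->
  continuity (fun t => h (pos_part (2 * t - 1)) + pos_part (1 - 2 * t) * u).
Proof.
 intros Hh t. unfold pos_part. apply continuity_pt_plus.
 - apply (continuity_pt_comp (fun t => (2 * t - 1 + Rabs (2 * t - 1)) / 2)); [reg|apply Hh].
 - reg.
Qed.

(* The new path runs from [b] back to [a] along the segment during [0, 1/2],
   then along [(f, g)]. *)
Lemma path_prepend (f g : R -> R) a b z :
  continuity f -> continuity g -> (f 0, g 0) = a -> (f 1, g 1) = z ->
  exists f' g', continuity f' /\ continuity g' /\ (f' 0, g' 0) = b /\ (f' 1, g' 1) = z /\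
   forall t, 0 <= t <= 1 ->
     (exists s, 0 <= s <= 1 /\ (f' t, g' t) = lin a b s) \/
     (exists s, 0 <= s <= 1 /\ (f' t, g' t) = (f s, g s)).
Proof.
 intros Hf Hg H0 H1. subst a z.
 exists (fun t => f (pos_part (2 * t - 1)) + pos_part (1 - 2 * t) * (fst b - f 0)).
 exists (fun t => g (pos_part (2 * t - 1)) + pos_part (1 - 2 * t) * (snd b - g 0)).
 split; [now apply continuity_prepend|]. split; [now apply continuity_prepend|].
 split; [|split].
 - rewrite pos_part_nonpos, pos_part_nonneg by lra. destruct b; simpl; f_equal; ring.
 - rewrite pos_part_nonneg, pos_part_nonpos by lra. f_equal; ring_simplify (2 * 1 - 1); ring.
 - intros t Ht. destruct (Rle_dec t (1 / 2)).
   + left. exists (1 - 2 * t). split; [lra|].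
     rewrite pos_part_nonpos, pos_part_nonneg by lra. reflexivity.
   + right. exists (2 * t - 1). split; [lra|].
     rewrite pos_part_nonneg, pos_part_nonpos by lra. f_equal; ring.
Qed.

Lemma not_polygon_disk P x : ~ polygon_disk P x ->
  exists z f g, far_from P z /\ continuity f /\ continuity g /\
    (f 0, g 0) = x /\ (f 1, g 1) = z /\
    forall t, 0 <= t <= 1 -> ~ on_polygon P (f t, g t).
Proof.
 intro Hn. apply NNPP; intro Hno. apply Hn. intros z Hz f g Hf Hg H0 H1.
 apply NNPP; intro Hp. apply Hno. exists z, f, g. repeat split; auto.
 intros t Ht Hon. apply Hp. eauto.
Qed.

Lemma polygon_in_disk P x : on_polygon P x -> polygon_disk P x.
Proof. intros Hx z _ f g _ _ H0 _. exists 0. split; [lra|]. now rewrite H0. Qed.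

Lemma polygon_disk_closed P : closed_pl (polygon_disk P).
Proof.
 intros x Hx. destruct (not_polygon_disk P x Hx) as (z & f & g & Hz & Hf & Hg & H0 & H1 & Hav).
 destruct (on_polygon_closed P x) as [d [Hd Hnear]]; [rewrite <- H0; apply Hav; lra|].
 exists d. split; auto. intros y Hy Hdisk.
 destruct (path_prepend f g x y z Hf Hg H0 H1) as (f' & g' & Hf' & Hg' & F0 & F1 & Hpath).
 destruct (Hdisk z Hz f' g' Hf' Hg' F0 F1) as [t [Ht Hon]].
 destruct (Hpath t Ht) as [[s [Hs Es]]|[s [Hs Es]]]; rewrite Es in Hon.
 - apply (Hnear _ (Rle_lt_trans _ _ _ (dist_lin_l_le x y s Hs) Hy) Hon).
 - exact (Hav s Hs Hon).
Qed.

Lemma disjoint_PL_disks_closed A : disjoint_PL_disks A -> closed_pl A.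
Proof.
 intros (Ps & _ & _ & _ & HA).
 apply (closed_pl_ext (fun x => exists P, In P Ps /\ polygon_disk P x)).
 - intro x. now rewrite HA.
 - apply closed_pl_union_list. intros P _. apply polygon_disk_closed.
Qed.

Lemma polygon_disk_interior P x : ~ on_polygon P x -> polygon_disk P x ->
  exists d, 0 < d /\ forall y, dist2 x y < d -> polygon_disk P y.
Proof.
 intros Hoff Hx. destruct (on_polygon_closed P x Hoff) as [d [Hd Hnear]].
 exists d. split; auto. intros y Hy z Hz f g Hf Hg H0 H1.
 destruct (path_prepend f g y x z Hf Hg H0 H1) as (f' & g' & Hf' & Hg' & F0 & F1 & Hpath).
 destruct (Hx z Hz f' g' Hf' Hg' F0 F1) as [t [Ht Hon]].
 destruct (Hpath t Ht) as [[s [Hs Es]]|[s [Hs Es]]]; rewrite Es in Hon.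
 - exfalso. apply (Hnear (lin y x s)); auto.
   rewrite dist2_sym, dist_lin_r, dist2_sym, Rabs_right by lra.
   pose proof (dist2_ge0 x y). nra.
 - eauto.
Qed.

Lemma seg_nonisolated p q t r : 0 <= t <= 1 -> 0 < r ->
  exists s, 0 <= s <= 1 /\ s <> t /\ dist2 (lin p q t) (lin p q s) < r.
Proof.
 intros Ht Hr. destruct (lin_near p q t r Hr) as [d [Hd Hnear]].
 set (e := Rmin (1 / 2) (d / 2)).
 assert (He : 0 < e <= 1 / 2 /\ e < d).
 { unfold e. pose proof (Rmin_l (1 / 2) (d / 2)). pose proof (Rmin_r (1 / 2) (d / 2)).
   pose proof (Rmin_pos (1 / 2) (d / 2)). lra. }
 destruct (Rle_dec t (1 / 2)); [exists (t + e)|exists (t - e)];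
   (split; [lra|split; [lra|apply Hnear; apply Rabs_def1; lra]]).
Qed.

Lemma disk_nonisolated P x : simple_polygon P -> polygon_disk P x ->
  forall r, 0 < r -> exists y, polygon_disk P y /\ y <> x /\ dist2 x y < r.
Proof.
 intros HP Hx r Hr. destruct (classic (on_polygon P x)) as [Hon|Hoff].
 - destruct Hon as [i [Hi [t [Ht Ex]]]]. fold (lin (vtx P i) (vtx P (S i mod length P)) t) in Ex.
   subst x. destruct (seg_nonisolated (vtx P i) (vtx P (S i mod length P)) t r Ht Hr)
     as [s [Hs [Hst Hd]]].
   exists (lin (vtx P i) (vtx P (S i mod length P)) s). split; [|split; auto].
   + apply polygon_in_disk. exists i. split; auto. exists s. split; auto.
   + intro E. apply lin_inj in E; [lra|]. apply HP, Hi.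
 - destruct (polygon_disk_interior P x Hoff Hx) as [d [Hd Hint]].
   set (e := Rmin d r / 2).
   assert (He : 0 < e /\ e < d /\ e < r).
   { unfold e. pose proof (Rmin_l d r). pose proof (Rmin_r d r). pose proof (Rmin_pos d r). lra. }
   assert (Dxy : dist2 x (fst x + e, snd x) = e).
   { unfold dist2; cbn [fst snd].
     replace ((fst x - (fst x + e)) ^ 2 + (snd x - snd x) ^ 2) with (e ^ 2) by ring.
     apply sqrt_pow2; lra. }
   exists (fst x + e, snd x). split; [|split].
   + apply Hint. lra.
   + intro E. rewrite E, dist2_refl in Dxy. lra.
   + lra.
Qed.

Lemma disjoint_PL_disks_nonisolated A x : disjoint_PL_disks A -> A x ->
  forall r, 0 < r -> exists y, A y /\ y <> x /\ dist2 x y < r.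
Proof.
 intros (Ps & _ & Hsimple & _ & HA) Ax r Hr. apply HA in Ax as [P [HP Hx]].
 destruct (disk_nonisolated P x (Hsimple P HP) Hx r Hr) as [y [Hy Hyx]].
 exists y. split; auto. apply HA. eauto.
Qed.

Definition bounded_pl (C : pset) : Prop := exists K, forall x, C x -> norm2 x <= K.

Lemma bounded_pl_union_list {T} (l : list T) (C : T -> pset) :
  (forall a, In a l -> bounded_pl (C a)) -> bounded_pl (fun x => exists a, In a l /\ C a x).
Proof.
 induction l as [|a l IH]; intro HC.
 - exists 0. intros x [b [[] _]].
 - destruct (HC a (or_introl eq_refl)) as [K1 H1].
   destruct (IH (fun b Hb => HC b (or_intror Hb))) as [K2 H2].
   exists (Rmax K1 K2). intros x [b [[<-|Hb] Cb]].
   + eapply Rle_trans; [apply H1, Cb|apply Rmax_l].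
   + eapply Rle_trans; [apply H2; eauto|apply Rmax_r].
Qed.

Lemma norm_lin p q t : 0 <= t <= 1 -> norm2 (lin p q t) <= Rmax (norm2 p) (norm2 q).
Proof.
 intro Ht. destruct p as [a b], q as [c d]. unfold norm2, dist2, lin; cbn [fst snd].
 rewrite !Rminus_0_r.
 assert (Hconv : (a + t * (c - a)) ^ 2 + (b + t * (d - b)) ^ 2
                 <= (1 - t) * (a ^ 2 + b ^ 2) + t * (c ^ 2 + d ^ 2)).
 { assert (0 <= t * (1 - t) * ((a - c) ^ 2 + (b - d) ^ 2)).
   { apply Rmult_le_pos; [nra|].
     pose proof (pow2_ge_0 (a - c)); pose proof (pow2_ge_0 (b - d)); lra. }
   replace ((1 - t) * (a ^ 2 + b ^ 2) + t * (c ^ 2 + d ^ 2))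
     with ((a + t * (c - a)) ^ 2 + (b + t * (d - b)) ^ 2
           + t * (1 - t) * ((a - c) ^ 2 + (b - d) ^ 2))
     by ring. lra. }
 destruct (Rle_dec (a ^ 2 + b ^ 2) (c ^ 2 + d ^ 2)).
 - eapply Rle_trans; [|apply Rmax_r]. apply sqrt_le_1_alt. nra.
 - eapply Rle_trans; [|apply Rmax_l]. apply sqrt_le_1_alt. nra.
Qed.

Lemma on_polygon_bounded P : bounded_pl (on_polygon P).
Proof.
 destruct (bounded_pl_union_list (seq 0 (length P)) (cedge P)) as [K HK].
 - intros i _. exists (Rmax (norm2 (vtx P i)) (norm2 (vtx P (S i mod length P)))).
   intros x [t [Ht Ex]]. rewrite Ex. now apply norm_lin.
 - exists K. intros x [i [Hi Hx]]. apply HK. exists i. rewrite in_seq. split; auto. lia.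
Qed.

Lemma polygon_disk_bounded P : bounded_pl (polygon_disk P).
Proof.
 destruct (on_polygon_bounded P) as [K HK]. exists K. intros x Hx.
 apply Rnot_lt_le. intro Hfar.
 destruct (Hx x) with (f := fun _ : R => fst x) (g := fun _ : R => snd x) as [t [_ Hon]].
 - intros i Hi. apply Rle_lt_trans with K; auto. apply HK. exists i. split; auto.
   exists 0. split; [lra|]. symmetry. apply lin0.
 - apply continuity_const. intros ? ?; reflexivity.
 - apply continuity_const. intros ? ?; reflexivity.
 - now destruct x.
 - now destruct x.
 - rewrite <- surjective_pairing in Hon. apply HK in Hon. lra.
Qed.

Lemma disjoint_PL_disks_bounded A : disjoint_PL_disks A -> bounded_pl A.
Proof.
 intros (Ps & _ & _ & _ & HA).
 destruct (bounded_pl_union_list Ps polygon_disk) as [K HK].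
 - intros P _. apply polygon_disk_bounded.
 - exists K. intros x Ax. apply HK, HA, Ax.
Qed.

Lemma lin_sup_closed C p q (E : R -> Prop) t0 : closed_pl C ->
  (forall t, E t -> 0 <= t <= 1 /\ C (lin p q t)) -> E t0 ->
  exists tau, is_lub E tau /\ 0 <= tau <= 1 /\ C (lin p q tau).
Proof.
 intros HC HE Et0.
 destruct (completeness E) as [tau [Hub Hlub]].
 { exists 1. intros t Et. apply HE, Et. }
 { eauto. }
 assert (Htau : 0 <= tau <= 1).
 { split; [apply Rle_trans with t0; [apply HE, Et0|auto]|].
   apply Hlub. intros t Et. apply HE, Et. }
 exists tau. split; [split; auto|split; auto].
 apply NNPP; intro Hn. destruct (HC _ Hn) as [d [Hd Hfar]].
 destruct (lin_near p q tau d Hd) as [e [He Hnear]].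
 assert (Hclose : exists t, E t /\ tau - e < t).
 { apply NNPP; intro Hno. enough (tau <= tau - e) by lra.
   apply Hlub. intros t Et. apply Rnot_lt_le. intro. apply Hno. eauto. }
 destruct Hclose as [t [Et Ht]]. assert (t <= tau) by (apply Hub, Et).
 apply (Hfar (lin p q t)); [apply Hnear, Rabs_def1; lra|apply HE, Et].
Qed.

Lemma nat_max_below (P : nat -> Prop) n k : P k -> (k < n)%nat ->
  exists j, P j /\ (j < n)%nat /\ forall i, P i -> (i < n)%nat -> (i <= j)%nat.
Proof.
 revert k; induction n as [|n IH]; intros k Hk Hn; [lia|].
 destruct (classic (P n)) as [Hp|Hp].
 - exists n. split; auto. split; [lia|]. intros; lia.
 - destruct (IH k Hk) as [j [Hj [Hjn Hmax]]].
   { destruct (Nat.eq_dec k n); [subst; contradiction|lia]. }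
   exists j. split; auto. split; [lia|]. intros i Hi Hin.
   destruct (Nat.eq_dec i n); [subst; contradiction|apply Hmax; auto; lia].
Qed.

Lemma edge_start l i : edge l i (vtx l i).
Proof. exists 0. split; [lra|]. symmetry. apply lin0. Qed.

Lemma last_meeting_point Q C : closed_pl C -> (2 <= length Q)%nat -> C (vtx Q 0) ->
  exists j tau, (S j < length Q)%nat /\ 0 <= tau <= 1 /\
    C (lin (vtx Q j) (vtx Q (S j)) tau) /\
    (forall t, 0 <= t <= 1 -> C (lin (vtx Q j) (vtx Q (S j)) t) -> t <= tau) /\
    (forall k x, (S k < length Q)%nat -> edge Q k x -> C x -> (k <= j)%nat).
Proof.
 intros HC HL H0.
 destruct (nat_max_below (fun j => exists x, edge Q j x /\ C x) (pred (length Q)) 0)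
   as [j [[x [[t0 [Ht0 Ex]] Cx]] [Hj Hmax]]];
   [exists (vtx Q 0); split; auto; apply edge_start|lia|].
 destruct (lin_sup_closed C (vtx Q j) (vtx Q (S j))
            (fun t => 0 <= t <= 1 /\ C (lin (vtx Q j) (vtx Q (S j)) t)) t0)
   as [tau [[Hub _] [Htau Ctau]]]; auto.
 { split; auto. fold (lin (vtx Q j) (vtx Q (S j)) t0) in Ex. now rewrite <- Ex. }
 exists j, tau. split; [lia|split; [exact Htau|split; [exact Ctau|split]]].
 - intros t Ht Ct. apply Hub. auto.
 - intros k y Hk Ey Cy. apply Hmax; [eauto|lia].
Qed.

Lemma skipn_cons_nth {A} (l : list A) k d : (k < length l)%nat ->
  skipn k l = nth k l d :: skipn (S k) l.
Proof.
 revert l; induction k as [|k IH]; intros [|a l] H; simpl in *; try lia; auto.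
 apply IH; lia.
Qed.

Lemma pl_length_ge0 l : 0 <= pl_length l.
Proof.
 induction l as [|a [|b l] IH]; simpl; try lra.
 pose proof (dist2_ge0 a b). simpl in IH. lra.
Qed.

Lemma pl_length_cons w l : l <> [] -> pl_length (w :: l) = dist2 w (vtx l 0) + pl_length l.
Proof. destruct l; [contradiction|reflexivity]. Qed.

Lemma pl_length_skipn k l : pl_length (skipn k l) <= pl_length l.
Proof.
 revert l; induction k as [|k IH]; intros [|a l]; simpl; try lra.
 eapply Rle_trans; [apply IH|]. destruct l as [|b l]; simpl; [lra|].
 pose proof (dist2_ge0 a b). lra.
Qed.

Lemma on_path_cons v0 l x : on_path (v0 :: l) x -> seg v0 (vtx l 0) x \/ on_path l x.
Proof.
 intros [[|i] [Hi Ex]]; [now left|right].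
 exists i. split; [simpl in Hi; lia|exact Ex].
Qed.

Lemma prepend_simple v0 l : simple_pl_path l -> v0 <> vtx l 0 ->
  (forall x, seg v0 (vtx l 0) x -> on_path l x -> x = vtx l 0) -> simple_pl_path (v0 :: l).
Proof.
 intros [HL [HD HI]] Hv Hm. split; [|split].
 - simpl. lia.
 - intros [|i] Hi; [exact Hv|]. apply HD. simpl in Hi. lia.
 - intros [|i] [|j] x Hi Hj Hij Ei Ej; try lia.
   + change (edge (v0 :: l) (S j)) with (edge l j) in Ej. simpl in Hj.
     assert (Ex : x = vtx l 0) by (apply Hm; [exact Ei|exists j; split; [lia|auto]]).
     subst x. destruct j as [|j]; [now split|exfalso].
     destruct (HI 0%nat (S j) (vtx l 0) ltac:(lia) ltac:(lia) ltac:(lia) (edge_start l 0) Ej)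
       as [Hj1 Hv1].
     injection Hj1 as ->. exact (HD 0%nat ltac:(lia) Hv1).
   + change (edge (v0 :: l) (S i)) with (edge l i) in Ei.
     change (edge (v0 :: l) (S j)) with (edge l j) in Ej. simpl in Hi, Hj.
     destruct (HI i j x ltac:(lia) ltac:(lia) ltac:(lia) Ei Ej) as [-> ->]. now split.
Qed.

Lemma seg_arc A x y : x <> y -> (forall z, seg x y z -> A z) -> pl_arc_in A x y [x; y].
Proof.
 intros Hxy HA. split; [split; [|split]|split; [reflexivity|split; [reflexivity|]]].
 - simpl; lia.
 - intros [|i] Hi; simpl in Hi; [exact Hxy|lia].
 - intros i k z Hi Hk; simpl in Hi, Hk; lia.
 - intros z [[|i] [Hi Ez]]; simpl in Hi; [apply HA, Ez|lia].
Qed.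

Lemma seg_sub_pref v0 a w x : seg v0 a w -> seg v0 w x -> seg v0 a x.
Proof.
 intros [s [Hs ->]] Hx. rewrite <- (lin0 v0 a) in Hx at 1.
 apply (seg_sub v0 a 0 s); auto; lra.
Qed.

Definition tail_path (Q : list pt) (j : nat) (tau : R) : list pt :=
  lin (vtx Q j) (vtx Q (S j)) tau :: skipn (S j) Q.

Section TailPath.

Variables (Q : list pt) (j : nat) (tau : R).
Hypothesis Hj : (S j < length Q)%nat.

Lemma length_tail_path : length (tail_path Q j tau) = S (length Q - S j).
Proof. unfold tail_path. cbn [length]. now rewrite length_skipn. Qed.

Lemma vtx_tail_path_S i : vtx (tail_path Q j tau) (S i) = vtx Q (S j + i).
Proof. apply nth_skipn. Qed.

Lemma edge_tail_path_S k : edge (tail_path Q j tau) (S k) = edge Q (S j + k).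
Proof. unfold edge. rewrite !vtx_tail_path_S. do 3 f_equal. lia. Qed.

Lemma edge_tail_path_0 x : tau <= 1 -> edge (tail_path Q j tau) 0 x ->
  exists s, tau <= s <= 1 /\ x = lin (vtx Q j) (vtx Q (S j)) s.
Proof.
 intros Ht [t [Hs ->]].
 change (vtx (tail_path Q j tau) 0) with (lin (vtx Q j) (vtx Q (S j)) tau).
 replace (vtx (tail_path Q j tau) 1) with (lin (vtx Q j) (vtx Q (S j)) 1)
   by (rewrite vtx_tail_path_S, lin1; f_equal; lia).
 fold (lin (lin (vtx Q j) (vtx Q (S j)) tau) (lin (vtx Q j) (vtx Q (S j)) 1) t).
 rewrite lin_lin. exists (tau + t * (1 - tau)). split; [nra|reflexivity].
Qed.

Lemma tail_path_last :
  vtx (tail_path Q j tau) (pred (length (tail_path Q j tau))) = vtx Q (pred (length Q)).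
Proof.
 rewrite length_tail_path. simpl pred. destruct (length Q - S j)%nat as [|k] eqn:E; [lia|].
 rewrite vtx_tail_path_S. f_equal. lia.
Qed.

Lemma tail_path_length : 0 <= tau <= 1 -> pl_length (tail_path Q j tau) <= pl_length Q.
Proof.
 intro Ht. unfold tail_path.
 assert (Hne : skipn (S j) Q <> []) by (intro E; apply skipn_all_iff in E; lia).
 assert (E0 : vtx (skipn (S j) Q) 0 = vtx Q (S j)) by (unfold vtx; rewrite nth_skipn; f_equal; lia).
 assert (Hskip : pl_length (skipn j Q)
                 = dist2 (vtx Q j) (vtx Q (S j)) + pl_length (skipn (S j) Q)).
 { rewrite (skipn_cons_nth Q j (0, 0)) by lia.
   rewrite pl_length_cons, E0 by exact Hne. reflexivity. }
 rewrite pl_length_cons, E0, dist_lin_r, Rabs_right by (exact Hne || lra).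
 pose proof (pl_length_skipn j Q). pose proof (dist2_ge0 (vtx Q j) (vtx Q (S j))). nra.
Qed.

Lemma on_tail_path x : tau <= 1 -> on_path (tail_path Q j tau) x ->
  (exists s, tau <= s <= 1 /\ x = lin (vtx Q j) (vtx Q (S j)) s) \/
  (exists k, (S (S j + k) < length Q)%nat /\ edge Q (S j + k) x).
Proof.
 intros Ht [[|k] [Hk Ex]].
 - left. now apply edge_tail_path_0.
 - right. exists k. rewrite length_tail_path in Hk. rewrite edge_tail_path_S in Ex.
   split; [lia|exact Ex].
Qed.

Lemma tail_path_simple : simple_pl_path Q -> 0 <= tau < 1 -> simple_pl_path (tail_path Q j tau).
Proof.
 intros [HL [HD HI]] Ht.
 assert (Hne : vtx Q j <> vtx Q (S j)) by (apply HD; lia).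
 split; [|split].
 - rewrite length_tail_path. lia.
 - intros [|i] Hi; rewrite length_tail_path in Hi.
   + change (vtx (tail_path Q j tau) 0) with (lin (vtx Q j) (vtx Q (S j)) tau).
     rewrite vtx_tail_path_S, Nat.add_0_r. rewrite <- (lin1 (vtx Q j) (vtx Q (S j))) at 2.
     intro E. apply lin_inj in E; [lra|exact Hne].
   + rewrite !vtx_tail_path_S. replace (S j + S i)%nat with (S (S j + i)) by lia.
     apply HD. lia.
 - intros [|i] [|k] x Hi Hk Hik Ei Ek; rewrite length_tail_path in Hi, Hk; try lia.
   + rewrite edge_tail_path_S in Ek. apply edge_tail_path_0 in Ei as [s [Hs Ex]]; [|lra].
     assert (Eq : edge Q j x) by (exists s; split; [lra|exact Ex]).
     destruct (HI j (S j + k)%nat x ltac:(lia) ltac:(lia) ltac:(lia) Eq Ek) as [Hk1 ->].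
     split; [lia|]. rewrite vtx_tail_path_S. f_equal; lia.
   + rewrite edge_tail_path_S in Ei, Ek.
     destruct (HI (S j + i)%nat (S j + k)%nat x ltac:(lia) ltac:(lia) ltac:(lia) Ei Ek) as [Hk1 ->].
     split; [lia|]. rewrite vtx_tail_path_S. f_equal; lia.
Qed.

End TailPath.

Lemma tail_path_arc A a y Q j tau : pl_arc_in A a y Q -> (S j < length Q)%nat -> 0 <= tau < 1 ->
  pl_arc_in A (lin (vtx Q j) (vtx Q (S j)) tau) y (tail_path Q j tau).
Proof.
 intros [HQ [_ [Hy HA]]] Hj Htau.
 split; [now apply tail_path_simple|split; [reflexivity|split; [now rewrite tail_path_last|]]].
 intros x Hx. apply HA.
 destruct (on_tail_path Q j tau Hj x ltac:(lra) Hx) as [[s [Hs Ex]]|[k [Hk Ex]]].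
 - exists j. split; [exact Hj|]. exists s. split; [lra|exact Ex].
 - exists (S j + k)%nat. split; [lia|exact Ex].
Qed.

Lemma last_meeting_vertex Q C j : (S j < length Q)%nat -> C (vtx Q (S j)) ->
  (forall k x, (S k < length Q)%nat -> edge Q k x -> C x -> (k <= j)%nat) ->
  S j = pred (length Q).
Proof.
 intros Hj HC Hmax. destruct (Nat.eq_dec (S j) (pred (length Q))) as [|Hne]; auto.
 enough (S j <= j)%nat by lia. apply (Hmax (S j) (vtx Q (S j))); auto; [lia|apply edge_start].
Qed.

(* Following the segment [v0, a] and then [Q] need not give an arc, so we leave the
   segment at the last point [w] of [Q] lying on it and follow [Q] from there on. *)
Lemma arc_prepend A v0 a y Q : pl_arc_in A a y Q -> (forall x, seg v0 a x -> A x) -> v0 <> y ->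
  exists l, pl_arc_in A v0 y l /\ pl_length l <= dist2 v0 a + pl_length Q.
Proof.
 intros HarcQ HsA Hvy. pose proof HarcQ as [[HL _] [Ha [Hy _]]].
 destruct (last_meeting_point Q (seg v0 a) (seg_closed v0 a) HL)
   as (j & tau & Hj & Htau & Hw & Hlast & Hmax).
 { rewrite Ha. exists 1. split; [lra|]. symmetry. apply lin1. }
 set (w := lin (vtx Q j) (vtx Q (S j)) tau) in *.
 assert (Hdw : dist2 v0 w <= dist2 v0 a).
 { destruct Hw as [s [Hs Ew]]. fold (lin v0 a s) in Ew. rewrite Ew. now apply dist_lin_l_le. }
 assert (HwA : forall x, seg v0 w x -> A x) by (intros x Hx; apply HsA; eapply seg_sub_pref; eauto).
 pose proof (pl_length_ge0 Q). pose proof (dist2_ge0 v0 a).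
 destruct (Req_dec tau 1) as [E1|Ht1].
 { assert (Ewy : w = y).
   { unfold w. rewrite E1, lin1, <- Hy. f_equal. apply (last_meeting_vertex Q (seg v0 a)); auto.
     rewrite <- (lin1 (vtx Q j) (vtx Q (S j))), <- E1. exact Hw. }
   rewrite Ewy in *. exists [v0; y]. split; [now apply seg_arc|simpl; lra]. }
 assert (Harc : pl_arc_in A w y (tail_path Q j tau)) by (apply (tail_path_arc A a); auto; lra).
 pose proof (tail_path_length Q j tau Hj ltac:(lra)).
 destruct (classic (w = v0)) as [Ewv|Ewv].
 { exists (tail_path Q j tau). split; [now rewrite <- Ewv|lra]. }
 exists (v0 :: tail_path Q j tau). destruct Harc as [Hsimple [_ [Hend HRA]]]. split.
 - split; [apply prepend_simple; auto|split; [reflexivity|split]].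
   + intros x Hx Hp. change (x = w). pose proof (seg_sub_pref _ _ _ _ Hw Hx) as Hxa.
     destruct (on_tail_path Q j tau Hj x ltac:(lra) Hp) as [[s [Hs Ex]]|[k [Hk Ex]]].
     * assert (s <= tau) by (apply Hlast; [lra|now rewrite <- Ex]).
       unfold w. rewrite Ex. f_equal. lra.
     * enough (S j + k <= j)%nat by lia. apply (Hmax _ x); [lia|exact Ex|exact Hxa].
   + rewrite <- Hend. cbn [length pred]. rewrite length_tail_path by exact Hj.
     destruct (length Q - S j)%nat; reflexivity.
   + intros x Hx. apply on_path_cons in Hx as [Hx|Hx]; auto.
 - rewrite pl_length_cons by discriminate. change (vtx (tail_path Q j tau) 0) with w. lra.
Qed.

Lemma int_pl_in A x : int_pl A x -> A x.
Proof. intros [r [Hr H]]. apply H. now rewrite dist2_refl. Qed.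

Lemma ball_seg (A : pset) x y r : dist2 x y < r -> (forall z, dist2 x z < r -> A z) ->
  forall z, seg x y z -> A z.
Proof.
 intros Hd HA z [t [Ht ->]]. apply HA. fold (lin x y t).
 eapply Rle_lt_trans; [apply dist_lin_l_le, Ht|exact Hd].
Qed.

Lemma exit_point A x q : closed_pl A -> A x -> ~ A q ->
  exists tau, 0 <= tau <= 1 /\ bdry A (lin x q tau) /\ forall z, seg x (lin x q tau) z -> A z.
Proof.
 intros HA Ax Aq.
 set (E := fun t => 0 <= t <= 1 /\ forall s, 0 <= s <= t -> A (lin x q s)).
 destruct (lin_sup_closed A x q E 0 HA) as [tau [[Hub Hlub] [Htau Atau]]].
 { intros t [Ht Hs]. split; [exact Ht|apply Hs; lra]. }
 { split; [lra|]. intros s Hs. replace s with 0 by lra. now rewrite lin0. }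
 assert (Hseg : forall s, 0 <= s <= tau -> A (lin x q s)).
 { intros s Hs. destruct (Req_dec s tau) as [->|Hne]; [exact Atau|].
   assert (Hbeyond : exists t, E t /\ s < t).
   { apply NNPP; intro Hno. enough (tau <= s) by lra.
     apply Hlub. intros t Et. apply Rnot_lt_le. intro. apply Hno. eauto. }
   destruct Hbeyond as [t [[_ Ht] Hst]]. apply Ht. lra. }
 exists tau. split; [exact Htau|split; [split|]].
 - intros d Hd. exists (lin x q tau). rewrite dist2_refl. auto.
 - intros [rho [Hrho Hball]].
   destruct (Req_dec tau 1) as [E1|E1].
   { apply Aq. rewrite <- (lin1 x q), <- E1. apply Hball. now rewrite dist2_refl. }
   destruct (lin_near x q tau rho Hrho) as [e [He Hnear]].
   set (t' := Rmin 1 (tau + e / 2)).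
   assert (Ht' : tau < t' <= 1 /\ t' - tau < e).
   { unfold t'. pose proof (Rmin_l 1 (tau + e / 2)). pose proof (Rmin_r 1 (tau + e / 2)).
     split; [split; [apply Rmin_glb_lt|]|]; lra. }
   enough (t' <= tau) by lra. apply Hub. split; [lra|].
   intros s Hs. destruct (Rle_dec s tau); [apply Hseg; lra|].
   apply Hball, Hnear, Rabs_def1; lra.
 - intros z Hz. rewrite <- (lin0 x q) in Hz at 1. destruct Hz as [t [Ht ->]].
   fold (lin (lin x q 0) (lin x q tau) t). rewrite lin_lin. apply Hseg. nra.
Qed.

Lemma reach_within_mono A B x d d' : reach_within A B x d -> d <= d' -> reach_within A B x d'.
Proof. intros [y [Hy [l [Hl Hd]]]] Hdd. exists y. split; auto. exists l. split; auto. lra. Qed.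

Lemma reach_within_from_B A B x r : disjoint_PL_disks B -> B x -> int_pl A x -> 0 < r ->
  reach_within A B x r.
Proof.
 intros HB Bx [rho [Hrho Hball]] Hr.
 destruct (disjoint_PL_disks_nonisolated B x HB Bx (Rmin rho r) (Rmin_pos _ _ Hrho Hr))
   as [y [By [Hyx Hd]]].
 pose proof (Rmin_l rho r). pose proof (Rmin_r rho r).
 exists y. split; auto. exists [x; y]. split.
 - apply seg_arc; auto. apply (ball_seg A x y rho); auto. lra.
 - simpl. lra.
Qed.

Lemma reach_within_via_boundary A B x r : closed_pl A -> A x -> ~ B x ->
  (forall p, bdry A p -> reach_within A B p r) -> ~ (forall q, dist2 x q < r -> A q) ->
  reach_within A B x (2 * r).
Proof.
 intros HA Ax Bx Hbd Hball.
 apply not_all_ex_not in Hball as [q Hq]. apply imply_to_and in Hq as [Hxq Aq].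
 destruct (exit_point A x q HA Ax Aq) as [tau [Htau [Hb Hs]]].
 set (p := lin x q tau) in *.
 destruct (Hbd p Hb) as [y [By [l [Hl Hlen]]]].
 assert (Hxp : dist2 x p < r) by (eapply Rle_lt_trans; [apply dist_lin_l_le, Htau|exact Hxq]).
 destruct (arc_prepend A x p y l Hl Hs) as [l' [Hl' Hlen']]; [intros ->; contradiction|].
 exists y. split; auto. exists l'. split; auto. lra.
Qed.

Lemma reach_or_far A B r : disjoint_PL_disks A -> disjoint_PL_disks B ->
  (forall x, B x -> int_pl A x) -> 0 < r -> (forall p, bdry A p -> reach_within A B p r) ->
  forall x, A x -> reach_within A B x (2 * r) \/ (forall y, B y -> r <= dist2 x y).
Proof.
 intros HA HB Hint Hr Hbd x Ax.
 destruct (classic (B x)) as [Bx|Bx].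
 { left. apply (reach_within_mono A B x r); [apply reach_within_from_B; auto|lra]. }
 destruct (classic (forall q, dist2 x q < r -> A q)) as [Hball|Hball].
 2:{ left. apply reach_within_via_boundary; auto. now apply disjoint_PL_disks_closed. }
 destruct (classic (exists y, B y /\ dist2 x y < r)) as [[y [By Hxy]]|Hno].
 - left. exists y. split; auto. exists [x; y]. split.
   + apply seg_arc; [intros ->; contradiction|]. now apply (ball_seg A x y r).
   + simpl. lra.
 - right. intros y By. apply Rnot_lt_le. intro. apply Hno. eauto.
Qed.

Lemma glb_nonneg (E : R -> Prop) : (forall d, E d -> 0 < d) -> Rbar_le 0 (Glb_Rbar E).
Proof. intro H. apply Glb_Rbar_correct. intros d Ed. simpl. left. auto. Qed.

Lemma glb_le (E : R -> Prop) d : E d -> Rbar_le (Glb_Rbar E) d.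
Proof. intro H. now apply Glb_Rbar_correct. Qed.

Lemma glb_lt (E : R -> Prop) (a : R) : Rbar_lt (Glb_Rbar E) a -> exists d, E d /\ d < a.
Proof.
 intro H. apply NNPP; intro Hn. apply (Rbar_lt_not_le _ _ H).
 apply Glb_Rbar_correct. intros d Ed. simpl. apply Rnot_lt_le. intro. apply Hn. eauto.
Qed.

Lemma glb_subset (E F : R -> Prop) : (forall d, E d -> F d) -> Rbar_le (Glb_Rbar F) (Glb_Rbar E).
Proof. intro H. apply Glb_Rbar_correct. intros d Ed. apply glb_le. auto. Qed.

Lemma M_AB_nonneg A B : Rbar_le 0 (M_AB A B).
Proof. apply glb_nonneg. intros d [Hd _]. exact Hd. Qed.

Lemma N_AB_nonneg A B : Rbar_le 0 (N_AB A B).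
Proof. apply glb_nonneg. intros d [Hd _]. exact Hd. Qed.

Lemma N_AB_le_M_AB A B : closed_pl A -> Rbar_le (N_AB A B) (M_AB A B).
Proof.
 intro HA. apply glb_subset. intros d [Hd Hall]. split; auto.
 intros x [Hcl _]. apply Hall. now apply closed_pl_cl.
Qed.

Lemma M_AB_le A B d : 0 < d -> (forall x, A x -> reach_within A B x d) -> Rbar_le (M_AB A B) d.
Proof. intros Hd Hall. apply glb_le. now split. Qed.

Lemma N_AB_lt A B (a : R) : Rbar_lt (N_AB A B) a -> forall p, bdry A p -> reach_within A B p a.
Proof.
 intros H p Hp. destruct (glb_lt _ _ H) as [d [[Hd Hall] Hda]].
 apply (reach_within_mono A B p d); auto. lra.
Qed.

Lemma Rbar_seq_to_0_nonneg (u : nat -> Rbar) : (forall n, Rbar_le 0 (u n)) ->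
  Rbar_seq_to_0 u <->
  forall eps, 0 < eps -> exists n0, forall n, (n0 <= n)%nat -> Rbar_lt (u n) eps.
Proof.
 intro Hu. split; intros H eps Heps; destruct (H eps Heps) as [n0 Hn0]; exists n0;
   intros n Hn; [apply Hn0, Hn|]. split; [|apply Hn0, Hn].
 apply Rbar_lt_le_trans with 0; [simpl; lra|apply Hu].
Qed.

Lemma abs_coord_le_norm x : Rabs (fst x) <= norm2 x /\ Rabs (snd x) <= norm2 x.
Proof.
 unfold norm2, dist2. cbn [fst snd]. rewrite !Rminus_0_r.
 pose proof (pow2_ge_0 (fst x)). pose proof (pow2_ge_0 (snd x)).
 split; [rewrite <- (sqrt_pow2 (Rabs (fst x)))|rewrite <- (sqrt_pow2 (Rabs (snd x)))];
   rewrite ?pow2_abs; try apply Rabs_pos; apply sqrt_le_1_alt; lra.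
Qed.

Lemma dist2_lt_of_coords x y c : Rabs (fst x - fst y) < c -> Rabs (snd x - snd y) < c ->
  dist2 x y < 2 * c.
Proof.
 intros H1 H2. pose proof (Rabs_pos (fst x - fst y)). pose proof (Rabs_pos (snd x - snd y)).
 unfold dist2. rewrite <- (sqrt_pow2 (2 * c)) by lra.
 rewrite <- (pow2_abs (fst x - fst y)), <- (pow2_abs (snd x - snd y)).
 apply sqrt_lt_1_alt. split; [nra|]. simpl. nra.
Qed.

(* Index of the grid interval of width [c] containing [v], counted from [-K]. *)
Definition grid_cell (K c v : R) : nat := Z.to_nat (up ((v + K) / c)).

Lemma grid_cell_bound K c v : 0 < c -> Rabs v <= K ->
  (grid_cell K c v <= Z.to_nat (up (2 * K / c)))%nat.
Proof.
 intros Hc Hv. apply Rabs_le_between in Hv. unfold grid_cell.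
 assert (Hq : 0 <= (v + K) / c <= 2 * K / c).
 { split; [apply Rdiv_le_0_compat; lra|]. apply Rmult_le_compat_r; [|lra].
   left. apply Rinv_0_lt_compat, Hc. }
 pose proof (archimed ((v + K) / c)). pose proof (archimed (2 * K / c)).
 apply Z2Nat.inj_le; [apply le_IZR; simpl; lra|apply le_IZR; simpl; lra|].
 apply Z.lt_succ_r, lt_IZR. rewrite succ_IZR. lra.
Qed.

Lemma grid_cell_close K c v w : 0 < c -> Rabs v <= K -> Rabs w <= K ->
  grid_cell K c v = grid_cell K c w -> Rabs (v - w) < c.
Proof.
 intros Hc Hv Hw E. apply Rabs_le_between in Hv, Hw. unfold grid_cell in E.
 assert (Hv' : 0 <= (v + K) / c) by (apply Rdiv_le_0_compat; lra).
 assert (Hw' : 0 <= (w + K) / c) by (apply Rdiv_le_0_compat; lra).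
 pose proof (archimed ((v + K) / c)) as [Av1 Av2]. pose proof (archimed ((w + K) / c)) as [Aw1 Aw2].
 apply Z2Nat.inj in E; [|apply le_IZR; simpl; lra|apply le_IZR; simpl; lra].
 rewrite E in Av1, Av2.
 assert (Hq : Rabs ((v + K) / c - (w + K) / c) < 1) by (apply Rabs_def1; lra).
 replace ((v + K) / c - (w + K) / c) with ((v - w) / c) in Hq by (field; lra).
 rewrite Rabs_div, (Rabs_right c) in Hq by lra.
 apply Rmult_lt_compat_r with (r := c) in Hq; [|exact Hc]. field_simplify in Hq; lra.
Qed.

(* Pigeonhole: two points in the same grid square of side [r/2] are closer than [r]. *)
Lemma separated_family_bounded K r : 0 < r ->
  exists N, forall (X : nat -> pt) (ns : list nat), NoDup ns ->
    (forall n, In n ns -> norm2 (X n) <= K) ->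
    (forall u v, In u ns -> In v ns -> u <> v -> r <= dist2 (X u) (X v)) ->
    (length ns <= N)%nat.
Proof.
 intro Hr. set (c := r / 2). assert (Hc : 0 < c) by (unfold c; lra).
 set (L := S (Z.to_nat (up (2 * K / c)))).
 exists (L * L)%nat. intros X ns Hnd HK Hsep.
 set (cell := fun n => (grid_cell K c (fst (X n)), grid_cell K c (snd (X n)))).
 assert (HKc : forall n, In n ns -> Rabs (fst (X n)) <= K /\ Rabs (snd (X n)) <= K).
 { intros n Hn. pose proof (abs_coord_le_norm (X n)). specialize (HK n Hn). lra. }
 assert (Hinj : NoDup (map cell ns)).
 { apply NoDup_map_NoDup_ForallPairs; auto. intros u v Hu Hv E.
   apply NNPP; intro Huv. injection E as E1 E2.
   destruct (HKc u Hu) as [U1 U2], (HKc v Hv) as [V1 V2].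
   pose proof (dist2_lt_of_coords _ _ _ (grid_cell_close K c _ _ Hc U1 V1 E1)
                 (grid_cell_close K c _ _ Hc U2 V2 E2)).
   specialize (Hsep u v Hu Hv Huv). unfold c in *. lra. }
 assert (Hincl : incl (map cell ns) (list_prod (seq 0 L) (seq 0 L))).
 { intros [i j] Hin. apply in_map_iff in Hin as [n [En Hn]]. injection En as <- <-.
   destruct (HKc n Hn) as [G1 G2].
   pose proof (grid_cell_bound K c _ Hc G1). pose proof (grid_cell_bound K c _ Hc G2).
   apply in_prod; apply in_seq; unfold L; lia. }
 pose proof (NoDup_incl_length Hinj Hincl) as Hlen.
 now rewrite length_map, length_prod, !length_seq in Hlen.
Qed.

Lemma long_lists_of_frequent (P : nat -> Prop) : (forall m, exists n, (m <= n)%nat /\ P n) ->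
  forall k, exists ns, length ns = k /\ NoDup ns /\ forall n, In n ns -> P n.
Proof.
 intros HP k. induction k as [|k [ns [Hl [Hnd Hns]]]].
 - exists []. split; [reflexivity|split; [constructor|intros n []]].
 - destruct (HP (S (list_max ns))) as [n [Hn Pn]].
   exists (n :: ns). split; [simpl; lia|split].
   + constructor; auto. intro Hin.
     pose proof (proj1 (list_max_le ns (list_max ns)) (le_n _)) as Hmax.
     rewrite Forall_forall in Hmax. specialize (Hmax n Hin). lia.
   + intros m [<-|Hm]; auto.
Qed.

Lemma nested_le (Sq : nat -> pset) : (forall n x, Sq (S n) x -> int_pl (Sq n) x) ->
  forall m n x, (m <= n)%nat -> Sq n x -> Sq m x.
Proof.
 intros Hnest m n x Hmn. induction Hmn as [|n Hmn IH]; auto.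
 intro Hx. apply IH, int_pl_in, Hnest, Hx.
Qed.

(* A witness [x_n] whose [r]-ball misses [S_(n+1)] lies in [S_n], which is contained in
   [S_(m+1)] for [m < n]; so the witnesses are [r]-separated points of the bounded [S_0]. *)
Lemma eventually_close (Sq : nat -> pset) r : 0 < r -> (forall n, disjoint_PL_disks (Sq n)) ->
  (forall n x, Sq (S n) x -> int_pl (Sq n) x) ->
  exists n0, forall n, (n0 <= n)%nat -> forall x, Sq n x -> exists y, Sq (S n) y /\ dist2 x y < r.
Proof.
 intros Hr HS Hnest. apply NNPP; intro Hinf.
 set (Far := fun n x => Sq n x /\ forall y, Sq (S n) y -> r <= dist2 x y).
 assert (Hfreq : forall m, exists n, (m <= n)%nat /\ exists x, Far n x).
 { intro m. apply NNPP; intro Hno. apply Hinf. exists m. intros n Hn x Hx.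
   apply NNPP; intro Hnear. apply Hno. exists n. split; auto. exists x. split; auto.
   intros y Hy. apply Rnot_lt_le. intro. apply Hnear. eauto. }
 destruct (functional_choice (fun n x => (exists x, Far n x) -> Far n x)) as [X HX].
 { intro n. destruct (classic (exists x, Far n x)) as [[x Hx]|Hno]; [exists x|exists (0, 0)];
     intro; [exact Hx|contradiction]. }
 destruct (disjoint_PL_disks_bounded (Sq 0%nat) (HS 0%nat)) as [K HK].
 destruct (separated_family_bounded K r Hr) as [N HN].
 destruct (long_lists_of_frequent (fun n => exists x, Far n x) Hfreq (S N)) as [ns [Hl [Hnd Hns]]].
 enough (length ns <= N)%nat by lia.
 apply (HN X ns Hnd).
 - intros n Hn. apply HK, (nested_le Sq Hnest 0 n); [lia|apply HX, Hns, Hn].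
 - assert (Hsep : forall u v, In u ns -> In v ns -> (u < v)%nat -> r <= dist2 (X u) (X v)).
   { intros u v Hu Hv Huv. apply (HX u (Hns u Hu)), (nested_le Sq Hnest (S u) v); [lia|].
     apply HX, Hns, Hv. }
   intros u v Hu Hv Huv. apply Nat.lt_gt_cases in Huv as [Huv|Huv]; [auto|].
   rewrite dist2_sym. auto.
Qed.

Theorem mainTheorem6 (Sq : nat -> pset) :
  (forall n, disjoint_PL_disks (Sq n)) ->
  (forall n x, Sq (S n) x -> int_pl (Sq n) x) ->
  (Rbar_seq_to_0 (fun n => M_AB (Sq n) (Sq (S n))) <->
   Rbar_seq_to_0 (fun n => N_AB (Sq n) (Sq (S n)))).
Proof.
 intros HS Hnest.
 rewrite !Rbar_seq_to_0_nonneg by (intro; apply M_AB_nonneg || apply N_AB_nonneg).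
 split; intros H eps Heps.
 - destruct (H eps Heps) as [n0 Hn0]. exists n0. intros n Hn.
   eapply Rbar_le_lt_trans; [|apply Hn0, Hn].
   apply N_AB_le_M_AB, disjoint_PL_disks_closed, HS.
 - set (r := eps / 4). assert (Hr : 0 < r) by (unfold r; lra).
   destruct (H r Hr) as [n1 Hn1].
   destruct (eventually_close Sq r Hr HS Hnest) as [n2 Hn2].
   exists (Nat.max n1 n2). intros n Hn.
   apply Rbar_le_lt_trans with (2 * r); [|simpl; unfold r; lra].
   apply M_AB_le; [lra|]. intros x Ax.
   destruct (reach_or_far (Sq n) (Sq (S n)) r (HS n) (HS (S n)) (Hnest n) Hr
               (N_AB_lt _ _ _ (Hn1 n ltac:(lia))) x Ax) as [|Hfar]; auto.
   destruct (Hn2 n ltac:(lia) x Ax) as [y [Hy Hxy]].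
   specialize (Hfar y Hy). lra.
Qed.
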